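(* Let $n\ge1$ and $\lambda\in\mathcal O(n)$, and let $\mu=\mathrm{Syl}(\lambda)\in\mathcal D(n)$ be the image of $\lambda$ under Sylvester's bijection. Then $\lambda^2\in\mathcal O(2n)$ and $\Phi(\lambda^2)=2\mu:=(2\mu_1,2\mu_2,\dots,2\mu_{\ell(\mu)})$.
   Context: A partition $\lambda$ of $n$ is a non-increasing sequence $\lambda=(\lambda_1,\dots,\lambda_\ell)$ of positive integers with sum $n$; $\ell(\lambda)=\ell$ is its length, and by convention $\lambda_j=0$ for $j>\ell$. $\mathcal O(n)$ is the set of partitions of $n$ all of whose parts are odd; $\mathcal D(n)$ is the set of partitions of $n$ with distinct parts. $m_i(\lambda)$ is the multiplicity of $i$ as a part of $\lambda$. The conjugate $\lambda'$ is given by $\lambda'_i=\#\{j:\lambda_j\ge i\}$. For partitions $\alpha,\beta$, $\alpha\circ\beta$ is the partition whose parts are all parts of $\alpha$ and of $\beta$ in non-increasing order, and $\alpha^2=\alpha\circ\alpha=(\alpha_1,\alpha_1,\alpha_2,\alpha_2,\dots)$. Sylvester's bijection $\mathrm{Syl}:\mathcal O(n)\to\mathcal D(n)$: for $\lambda\in\mathcal O(n)$ let $d=\max\{j:\lambda_j\ge 2j-1\}$; set $\epsilon=0$ if $\lambda_d>2d-1$ and $\epsilon=1$ if $\lambda_d=2d-1$. Then $\mathrm{Syl}(\lambda)=\mu$ has $2d-\epsilon$ parts given by $\mu_{2j-1}=\frac{\lambda_j+1}{2}+\lambda'_{2j-1}-2j+1$ for $j=1,\dots,d$, and $\mu_{2j}=\frac{\lambda_j-1}{2}+\lambda'_{2j+1}-2j+1$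 for $j=1,\dots,d-\epsilon$. Bressoud's map $B$: for $\beta\in\mathcal O(n)\cap\mathcal D(n)$, decompose the parts of $\beta$ into runs (maximal sequences of consecutive odd integers all occurring as parts of $\beta$). For a run $2m-1>\dots>2m-2k+1$ form pairs $(2m-1,2m-3),(2m-5,2m-7),\dots$ from the largest term; if $k$ is odd the remaining smallest term $c$ becomes the pair $(\frac{c+1}{2},\frac{c-1}{2})$. Concatenate all pairs (runs in decreasing order) into $\pi=(\pi_1,\dots,\pi_{2s})$ with pairs $(\pi_{2j-1},\pi_{2j})$. A pair interchange replaces adjacent pairs $(a+1,a),(2b+1,2b-1)$ in positions $2j-1,\dots,2j+2$ with $a\le 2b+1$ by $(2b+3,2b+1,a-1,a-2)$. Apply pair interchanges (leftmost first) until none is possible and delete zero entries to get $B(\beta)$; $B$ of the empty partition is empty. Insertion: for a partition $\gamma$ (with $\gamma_k=0$ for $k>\ell(\gamma)$) and an integer $a\ge1$, define $I_a(\gamma)$: for $j=0,1,2,\dots$ in turn, if $j=a-1$ set $I_a(\gamma)=(\gamma_1+2,\dots,\gamma_{2j}+2,\gamma_{2j+1}+2,\gamma_{2j+2},\dots)$ and stop; otherwise, if $2a-2j-2>\gamma_{2j+1}$ set $I_a(\gamma)=(\gamma_1+2,\dots,\gamma_{2j}+2,2a-2j,2a-2j-2,\gamma_{2j+1},\gamma_{2j+2},\dots)$ and stop; otherwise pass to $j+1$. Zero entries are discarded. The map $\Phi:\mathcal O(n)\to\mathcal D(n)$: for $\lambda\in\mathcal O(n)$ write uniquely $\lambda=\alpha^2\circ\beta$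 with $\beta$ having distinct parts. Let $t=\ell(\alpha)$, $\alpha_i=2a_i-1$. Set $\gamma^{(0)}=B(\beta)$, $\gamma^{(i)}=I_{a_i}(\gamma^{(i-1)})$ for $i=1,\dots,t$, and $\Phi(\lambda)=\gamma^{(t)}$. *)

(* Partitions are represented as sequences of naturals
   (parts listed in non-increasing order); lambda_j = nth 0 lambda (j-1). *)
From mathcomp Require Import all_boot.
Set Implicit Arguments. Unset Strict Implicit. Unset Printing Implicit Defensive.

Definition is_partition (n : nat) (l : seq nat) : bool :=
  [&& sorted geq l, all (fun x => 0 < x) l & sumn l == n].

Definition in_O (n : nat) (l : seq nat) : bool := is_partition n l && all odd l.

Definition in_D (n : nat) (l : seq nat) : bool := is_partition n l && uniq l.

(* the j-th part (1-based), 0 beyond the length *)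
Definition part (l : seq nat) (j : nat) : nat := nth 0 l j.-1.

Definition conj_part (l : seq nat) (i : nat) : nat := count (fun x => i <= x) l.

Definition psq (l : seq nat) : seq nat := flatten [seq [:: x; x] | x <- l].

Definition pdouble (l : seq nat) : seq nat := [seq 2 * x | x <- l].

(* d = max { j : lambda_j >= 2j - 1 }  (0 if no such j) *)
Definition syl_d (l : seq nat) : nat :=
  foldr maxn 0 [seq j.+1 | j <- iota 0 (size l) & (2 * j).+1 <= nth 0 l j].

Definition syl_eps (l : seq nat) : bool := part l (syl_d l) == (2 * syl_d l).-1.

Definition syl_odd (l : seq nat) (j : nat) : nat :=
  (part l j).+1./2 + conj_part l (2 * j).-1 + 1 - 2 * j.
Definition syl_even (l : seq nat) (j : nat) : nat :=
  (part l j).-1./2 + conj_part l (2 * j).+1 + 1 - 2 * j.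

Definition Syl (l : seq nat) : seq nat :=
  let d := syl_d l in
  flatten [seq (if (j == d) && syl_eps l then [:: syl_odd l j]
                else [:: syl_odd l j; syl_even l j]) | j <- iota 1 d].

(* decomposition of a decreasing seq of odd numbers into maximal runs of
   consecutive odd integers *)
Fixpoint runs (s : seq nat) : seq (seq nat) :=
  match s with
  | [::] => [::]
  | x :: s' =>
    match runs s' with
    | (y :: r) :: rs => if y + 2 == x then (x :: y :: r) :: rs
                        else [:: x] :: (y :: r) :: rs
    | rs => [:: x] :: rs
    end
  end.

Fixpoint run_pairs (r : seq nat) : seq nat :=
  match r with
  | x :: y :: r' => x :: y :: run_pairs r'
  | [:: c] => [:: c.+1./2; c./2]
  | [::] => [::]
  end.

Definition bressoud_pi (b : seq nat) : seq nat :=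
  flatten [seq run_pairs r | r <- runs b].

Fixpoint interchange (p : seq nat) : option (seq nat) :=
  match p with
  | x1 :: x2 :: rest =>
    match rest with
    | x3 :: x4 :: tl =>
      if [&& x1 == x2.+1, odd x3, x4 + 2 == x3 & x2 <= x3]
      then Some (x3.+2 :: x3 :: x2.-1 :: x2.-2 :: tl)
      else option_map (fun q => x1 :: x2 :: q) (interchange rest)
    | _ => None
    end
  | _ => None
  end.

Fixpoint interchange_iter (fuel : nat) (p : seq nat) : seq nat :=
  match fuel with
  | 0 => p
  | f.+1 => match interchange p with
            | Some q => interchange_iter f q
            | None => p
            end
  end.

(* Each interchange swaps a "(a+1,a)"-pair with the following odd pair, so the
   number of interchanges is at most (#pairs)^2 <= (size pi)^2; the fuel below
   therefore always suffices to reach the state where none is possible. *)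
Definition B (b : seq nat) : seq nat :=
  let p := bressoud_pi b in
  [seq x <- interchange_iter ((size p) ^ 2).+1 p | x != 0].

(* first j in 0..a-2 with 2a-2j-2 > gamma_{2j+1}, and a-1 if there is none *)
Definition ins_j (a : nat) (g : seq nat) : nat :=
  find (fun j => nth 0 g (2 * j) < 2 * a - 2 * j - 2) (iota 0 a.-1).

Definition ins (a : nat) (g : seq nat) : seq nat :=
  let j := ins_j a g in
  let g' := g ++ nseq (2 * a) 0 in
  [seq x <- (if j == a.-1 then
               [seq x + 2 | x <- take (2 * j).+1 g'] ++ drop (2 * j).+1 g'
             else
               [seq x + 2 | x <- take (2 * j) g'] ++
               [:: 2 * a - 2 * j; 2 * a - 2 * j - 2] ++ drop (2 * j) g')
  | x != 0].

(* lambda = alpha^2 o beta with beta having distinct parts *)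
Definition phi_alpha (l : seq nat) : seq nat :=
  flatten [seq nseq (count_mem v l)./2 v | v <- undup l].
Definition phi_beta (l : seq nat) : seq nat :=
  [seq v <- undup l | odd (count_mem v l)].

(* gamma^(0) = B beta, gamma^(i) = I_{a_i}(gamma^(i-1)), alpha_i = 2 a_i - 1 *)
Definition Phi (l : seq nat) : seq nat :=
  foldl (fun g x => ins x.+1./2 g) (B (phi_beta l)) (phi_alpha l).

(* The square of lambda has no unpaired part, so Phi builds its image by inserting the
   parts 2a - 1 of lambda one at a time, largest first, into the empty partition. It is
   therefore enough to show that inserting the smallest part x = 2a - 1 of [rcons l x] into
   2 Syl(l) gives 2 Syl(rcons l x). Appending x raises l'_c by one exactly for c <= x,
   hence raises mu_1, ..., mu_(2a-1) by one; and with d the Sylvester index of l the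
   insertion stops at j = min(d, a-1). For a <= d + 1 it only adds 2 to the first 2a - 1
   parts (creating the new part 2 = 2 mu_(2d+1) when a = d + 1), while for a > d + 1 it
   appends the new pair 2 (a - d), 2 (a - d - 1) = 2 mu_(2d+1), 2 mu_(2d+2). *)

From mathcomp Require Import all_boot zify.
Set Implicit Arguments. Unset Strict Implicit. Unset Printing Implicit Defensive.

Lemma geq_trans : transitive geq.
Proof. exact: rev_trans leq_trans. Qed.

Lemma sorted_geq_nth s : sorted geq s -> {homo nth 0 s : i j /~ i <= j}.
Proof.
move=> s_sorted i j le_ji; have [lt_is|ge_is] := ltnP i (size s); last by rewrite nth_default.
by apply: (sorted_leq_nth geq_trans leqnn) => //; rewrite inE; lia.
Qed.

Lemma sorted_rcons_prefix (T : Type) (leT : rel T) s x :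
  sorted leT (rcons s x) -> sorted leT s.
Proof. by case: s => //= y s; rewrite rcons_path => /andP []. Qed.

Lemma sorted_flatten_nseq (c : nat -> nat) u :
  sorted geq u -> sorted geq (flatten [seq nseq (c v) v | v <- u]).
Proof.
rewrite !sorted_pairwise; [|exact: geq_trans..].
elim: u => //= v u IH /andP [v_ge pu]; rewrite pairwise_cat IH // andbT.
apply/andP; split.
  apply/allrelP => y z /nseqP [-> _] /flattenP [_ /mapP [w wu ->] /nseqP [-> _]].
  exact: (allP v_ge).
by elim: (c v) => //= n ->; rewrite all_nseq /= leqnn orbT.
Qed.

Lemma iota1S m : iota 1 m.+1 = rcons (iota 1 m) m.+1.
Proof. by rewrite -cats1 -[m.+1]addn1 iotaD addnC. Qed.

Lemma foldr_maxn_iota m D :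
  foldr maxn 0 [seq j.+1 | j <- iota m D] = if D is 0 then 0 else m + D.
Proof. by elim: D m => [//|D IH] m /=; rewrite IH; case: D {IH}; lia. Qed.

Lemma find_iota0 (P : pred nat) n m : m <= n -> (forall j, j < m -> ~~ P j) ->
  (m < n -> P m) -> find P (iota 0 n) = m.
Proof.
move=> le_mn notP_below P_m; rewrite -(subnKC le_mn) iotaD find_cat.
rewrite ifF; last by apply/negbTE/hasPn => j; rewrite mem_iota => /andP [_ /notP_below].
rewrite size_iota add0n; case def_nm: (n - m) => [|r] /=; first by rewrite addn0.
by rewrite P_m ?addn0 //; lia.
Qed.

Lemma eq_in_mkseq (T : Type) (f g : nat -> T) n :
  (forall i, i < n -> f i = g i) -> mkseq f n = mkseq g n.
Proof. by move=> eq_fg; apply/eq_in_map => i; rewrite mem_iota => /andP [_ /eq_fg]. Qed.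

Lemma filter_neq0_mkseq (f : nat -> nat) m n : m <= n ->
  (forall i, i < m -> f i != 0) -> (forall i, m <= i < n -> f i = 0) ->
  [seq y <- mkseq f n | y != 0] = mkseq f m.
Proof.
move=> le_mn f_neq0 f_eq0; rewrite /mkseq -(subnKC le_mn) iotaD map_cat filter_cat.
rewrite (eq_in_filter (a2 := predT)) ?filter_predT; last first.
  by move=> y /mapP [i]; rewrite mem_iota => /andP [_ /f_neq0] ? ->.
rewrite (eq_in_filter (a2 := pred0)) ?filter_pred0 ?cats0 //.
by move=> y /mapP [i]; rewrite mem_iota => /andP [? ?] ->; rewrite f_eq0 //; lia.
Qed.

Lemma filter_neq0_nseq n : [seq y <- nseq n 0 | y != 0] = [::].
Proof. by elim: n. Qed.

Lemma map_add2_take_cat_drop (g : seq nat) m : m <= size g ->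
  [seq y + 2 | y <- take m g] ++ drop m g = mkseq (fun i => nth 0 g i + 2 * (i < m)) (size g).
Proof.
move=> le_mg; apply: (eq_from_nth (x0 := 0)).
  by rewrite size_cat size_map size_takel // size_drop size_mkseq; lia.
move=> i; rewrite size_cat size_map size_takel // size_drop => lt_i.
rewrite nth_mkseq; last lia.
rewrite nth_cat size_map size_takel //; case: ifP => lt_im.
  by rewrite (nth_map 0) ?size_takel // nth_take // muln1.
by rewrite nth_drop muln0 addn0 subnKC // leqNgt lt_im.
Qed.

Lemma nat_double_ind (P : nat -> Prop) :
  (forall m, P (2 * m)) -> (forall m, P (2 * m).+1) -> forall i, P i.
Proof.
move=> P_even P_odd i; rewrite -(odd_double_half i) -mul2n.
by case: (odd i); [rewrite add1n; apply: P_odd | apply: P_even].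
Qed.

Lemma odd_half y : odd y -> y = (2 * y./2).+1.
Proof. by move=> odd_y; rewrite -[LHS]odd_double_half odd_y mul2n. Qed.

(** * Doubling a partition *)

Lemma count_psq p l : count p (psq l) = 2 * count p l.
Proof. by elim: l => //= x l IH; rewrite IH; lia. Qed.

Lemma sumn_psq l : sumn (psq l) = 2 * sumn l.
Proof. by elim: l => //= x l IH; rewrite IH; lia. Qed.

Lemma all_psq p l : all p (psq l) = all p l.
Proof. by elim: l => //= x l ->; case: (p x). Qed.

Lemma mem_psq l : psq l =i l.
Proof. by move=> y; rewrite -!has_pred1 !has_count count_psq muln_gt0. Qed.

Lemma undup_psq l : undup (psq l) = undup l.
Proof.
elim: l => //= x l IH; rewrite inE eqxx /= mem_psq.
by case: (x \in l) => //; rewrite IH.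
Qed.

Lemma sorted_psq l : sorted geq l -> sorted geq (psq l).
Proof.
rewrite !sorted_pairwise; [|exact: geq_trans..].
elim: l => //= x l IH /andP [x_ge pl]; by rewrite leqnn /= !all_psq x_ge IH.
Qed.

Lemma phi_alpha_psq l : sorted geq l -> phi_alpha (psq l) = l.
Proof.
move=> l_sorted; rewrite /phi_alpha undup_psq.
under eq_map => v do rewrite count_psq mul2n doubleK.
apply: (sorted_eq geq_trans) => //; last exact: perm_count_undup.
- by move=> y z; rewrite /= -eqn_leq => /eqP.
- exact/sorted_flatten_nseq/(subseq_sorted geq_trans (undup_subseq _)).
Qed.

Lemma phi_beta_psq l : phi_beta (psq l) = [::].
Proof.
apply/eqP; rewrite -[_ == _]negbK -has_filter; apply/hasPn => v _.
by rewrite count_psq oddM.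
Qed.

(** * Sylvester's bijection *)

Definition interleave (fo fe : nat -> nat) i :=
  if odd i then fe (i./2).+1 else fo (i./2).+1.

Lemma interleave_double fo fe m : interleave fo fe (2 * m) = fo m.+1.
Proof. by rewrite /interleave oddM /= mul2n doubleK. Qed.

Lemma interleave_doubleS fo fe m : interleave fo fe (2 * m).+1 = fe m.+1.
Proof. by rewrite /interleave /= oddM /= mul2n uphalf_double. Qed.

Lemma flatten_pairs_mkseq (d : nat) (e : bool) fo fe :
  flatten [seq if (j == d) && e then [:: fo j] else [:: fo j; fe j] | j <- iota 1 d]
  = mkseq (interleave fo fe) (2 * d - e).
Proof.
have below m : m < d ->
    flatten [seq if (j == d) && e then [:: fo j] else [:: fo j; fe j] | j <- iota 1 m]
    = mkseq (interleave fo fe) (2 * m).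
  elim: m => [//|m IH] lt_md.
  rewrite iota1S map_rcons flatten_rcons IH; last exact: ltnW.
  have -> : (m.+1 == d) = false by apply/eqP; lia.
  rewrite (_ : 2 * m.+1 = (2 * m).+2); last lia.
  by rewrite !mkseqS interleave_double interleave_doubleS -!cats1 -catA.
case: d below => [|d] below; first by rewrite muln0.
rewrite iota1S map_rcons flatten_rcons below // eqxx /=.
rewrite (_ : 2 * d.+1 - e = (2 * d).+1 + ~~ e); last by case: (e); lia.
by case: (e); rewrite /= ?addn1 ?addn0 !mkseqS ?interleave_double ?interleave_doubleS -!cats1 -?catA.
Qed.

(* [syl_part l i] is mu_(i+1), and [Syl l] has [syl_size l] = 2d - eps parts. *)
Definition syl_part l := interleave (syl_odd l) (syl_even l).
Definition syl_size l := 2 * syl_d l - syl_eps l.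

Lemma Syl_mkseq l : Syl l = mkseq (syl_part l) (syl_size l).
Proof. exact: flatten_pairs_mkseq. Qed.

Lemma pdouble_Syl l : pdouble (Syl l) = mkseq (fun i => 2 * syl_part l i) (syl_size l).
Proof. by rewrite /pdouble Syl_mkseq /mkseq -map_comp. Qed.

Lemma nth_pdouble_Syl l i :
  nth 0 (pdouble (Syl l)) i = if i < syl_size l then 2 * syl_part l i else 0.
Proof.
rewrite pdouble_Syl; case: ltnP => [lt_i | le_i]; first by rewrite nth_mkseq.
by rewrite nth_default // size_mkseq.
Qed.

Lemma lt_syl_d_of_size l m : 2 * m < syl_size l -> m < syl_d l.
Proof. by rewrite /syl_size; case: (syl_eps l); lia. Qed.

Lemma conj_part_ge l c j : {homo nth 0 l : i j /~ i <= j} -> j <= size l ->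
  (0 < j -> c <= nth 0 l j.-1) -> j <= conj_part l c.
Proof.
move=> l_nonincr le_jl c_le; rewrite /conj_part -(cat_take_drop j l) count_cat.
suff -> : count (fun y => c <= y) (take j l) = j by apply: leq_addr.
apply/eqP; rewrite -{2}(size_takel le_jl) -all_count; apply/(all_nthP 0) => i.
rewrite size_takel // => lt_ij; rewrite nth_take //.
by apply: leq_trans (c_le _) (l_nonincr _ _ _); lia.
Qed.

Lemma conj_part_all l c : all (leq c) l -> conj_part l c = size l.
Proof. by move=> /allP c_le; apply/eqP; rewrite -all_count; apply/allP. Qed.

Lemma conj_part_rcons l x c : conj_part (rcons l x) c = conj_part l c + (c <= x).
Proof. by rewrite /conj_part -cats1 count_cat /= addn0. Qed.

Section SylvesterIndex.

Variable l : seq nat.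
Hypothesis l_nonincr : {homo nth 0 l : i j /~ i <= j}.

Lemma syl_dP :
  (forall j, j < syl_d l -> (2 * j).+1 <= nth 0 l j) /\ nth 0 l (syl_d l) < (2 * syl_d l).+1.
Proof.
pose below_diag j := nth 0 l j < (2 * j).+1.
have ex_below : exists j, below_diag j by exists (size l); rewrite /below_diag nth_default.
have [D below_D D_min] := ex_minnP ex_below.
have above j : j < D -> (2 * j).+1 <= nth 0 l j.
  by move=> lt_jD; rewrite leqNgt; apply/negP => /D_min; lia.
have not_above j : D <= j -> nth 0 l j < (2 * j).+1.
  by move=> le_Dj; have := l_nonincr le_Dj; move: below_D; rewrite /below_diag; lia.
have le_D_size : D <= size l.
  by rewrite leqNgt; apply/negP => /above; rewrite nth_default.
suff -> : syl_d l = D by [].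
rewrite /syl_d -(subnKC le_D_size) iotaD filter_cat add0n.
rewrite (eq_in_filter (a2 := predT)) ?filter_predT; last first.
  by move=> j; rewrite mem_iota => /andP [_ ?]; apply: above.
rewrite (eq_in_filter (a2 := pred0)) ?filter_pred0 ?cats0; last first.
  by move=> j; rewrite mem_iota => /andP [/not_above ? _]; apply/negbTE; lia.
by rewrite foldr_maxn_iota; case: D {below_D D_min above not_above le_D_size}.
Qed.

Lemma syl_d_eq D : (forall j, j < D -> (2 * j).+1 <= nth 0 l j) ->
  nth 0 l D < (2 * D).+1 -> syl_d l = D.
Proof.
have [above below] := syl_dP => above_D below_D.
by case: (ltngtP (syl_d l) D) => // [/above_D | /above]; lia.
Qed.

Lemma syl_d_le_size : syl_d l <= size l.
Proof.
have [above _] := syl_dP; rewrite leqNgt; apply/negP => /above.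
by rewrite nth_default.
Qed.

End SylvesterIndex.

Section SylvesterParts.

Variable l : seq nat.
Hypotheses (l_nonincr : {homo nth 0 l : i j /~ i <= j}) (l_odd : all odd l).

Lemma nth_above_diag m : m < syl_d l -> [/\ m < size l, (2 * m).+1 <= nth 0 l m & odd (nth 0 l m)].
Proof.
have [above _] := syl_dP l_nonincr => /above le_nth.
have lt_m_size : m < size l by rewrite ltnNge; apply/negP => /(nth_default 0); lia.
by split => //; apply: (all_nthP 0 l_odd).
Qed.

Lemma syl_part_double m : 2 * m < syl_size l ->
  syl_part l (2 * m) + 2 * m.+1 = (nth 0 l m).+1./2 + conj_part l (2 * m).+1 + 1
  /\ 0 < syl_part l (2 * m).
Proof.
move=> /lt_syl_d_of_size lt_md; have [lt_m_size le_nth odd_nth] := nth_above_diag lt_md.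
have [above _] := syl_dP l_nonincr.
have le_conj : m.+1 <= conj_part l (2 * m).+1.
  by apply: conj_part_ge => // _; apply: above.
rewrite /syl_part interleave_double /syl_odd (_ : (2 * m.+1).-1 = (2 * m).+1); last lia.
change (part l m.+1) with (nth 0 l m).
have := odd_half odd_nth; lia.
Qed.

Lemma syl_part_doubleS m : (2 * m).+1 < syl_size l ->
  syl_part l (2 * m).+1 + 2 * m.+1 = (nth 0 l m).-1./2 + conj_part l (2 * m.+1).+1 + 1
  /\ 0 < syl_part l (2 * m).+1.
Proof.
move=> lt_size; have lt_md : m < syl_d l by apply: lt_syl_d_of_size; lia.
have [lt_m_size le_nth odd_nth] := nth_above_diag lt_md.
have [above _] := syl_dP l_nonincr.
rewrite /syl_part interleave_doubleS /syl_even.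
change (part l m.+1) with (nth 0 l m).
have := odd_half odd_nth; set p := nth 0 l m => def_p.
have [lt_mSd | le_dmS] := ltnP m.+1 (syl_d l).
  have [lt_mS_size le_nthS _] := nth_above_diag lt_mSd.
  have le_nthS_p : nth 0 l m.+1 <= p by apply: l_nonincr.
  have le_conj : m.+2 <= conj_part l (2 * m.+1).+1.
    by apply: conj_part_ge => // _; rewrite /=; lia.
  lia.
(* For m.+1 = d we have eps = 0, so the odd part lambda_d exceeds 2d - 1, i.e. >= 2d + 1. *)
have def_d : syl_d l = m.+1 by lia.
have : syl_eps l = false by move: lt_size; rewrite /syl_size def_d; case: (syl_eps l); lia.
rewrite /syl_eps def_d /part /= -/p => /eqP p_neq.
have le_conj : m.+1 <= conj_part l (2 * m.+1).+1.
  by apply: conj_part_ge => // _; rewrite /=; lia.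
lia.
Qed.

Lemma syl_part_gt0 i : i < syl_size l -> 0 < syl_part l i.
Proof.
elim/nat_double_ind: i => m lt_size.
  by have [] := syl_part_double lt_size.
by have [] := syl_part_doubleS lt_size.
Qed.

Lemma pdouble_Syl_gt0 : all (leq 1) (pdouble (Syl l)).
Proof.
apply/allP => y; rewrite pdouble_Syl => /mapP [i]; rewrite mem_iota => /andP [_ lt_i] ->.
by rewrite muln_gt0 syl_part_gt0.
Qed.

End SylvesterParts.

(** * Inserting the smallest part *)

Lemma ins_top a g : 0 < a -> ins_j a g = a.-1 ->
  ins a g = [seq y <- mkseq (fun i => nth 0 g i + 2 * (i < (2 * a).-1)) (size g + 2 * a) | y != 0].
Proof.
move=> a_gt0 top; rewrite /ins top eqxx (_ : (2 * a.-1).+1 = (2 * a).-1); last lia.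
rewrite map_add2_take_cat_drop; last by rewrite size_cat size_nseq; lia.
rewrite size_cat size_nseq; congr filter; apply: eq_in_mkseq => i _.
rewrite nth_cat nth_nseq; case: ltnP => // le_gi.
by rewrite (nth_default _ le_gi); case: ifP.
Qed.

Lemma ins_mid a g (j := ins_j a g) : j < a.-1 -> 2 * j <= size g -> all (leq 1) g ->
  ins a g = [seq y + 2 | y <- take (2 * j) g] ++ [:: 2 * a - 2 * j; 2 * a - 2 * j - 2]
            ++ drop (2 * j) g.
Proof.
move=> lt_ja le_jg g_gt0; rewrite /ins -/j ifF; last by apply/eqP; lia.
have drop_padded : drop (2 * j) (g ++ nseq (2 * a) 0) = drop (2 * j) g ++ nseq (2 * a) 0.
  rewrite drop_cat; case: ltnP => // le_gj.
  by rewrite (_ : 2 * j - size g = 0) ?drop0 ?drop_oversize //; lia.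
rewrite takel_cat // drop_padded !filter_cat filter_neq0_nseq cats0.
have /all_filterP -> : all (fun y => y != 0) [seq y + 2 | y <- take (2 * j) g].
  by apply/allP => _ /mapP [y _ ->]; rewrite addn2.
have /all_filterP -> : all (fun y => y != 0) (drop (2 * j) g).
  by apply/allP => y /mem_drop /(allP g_gt0); rewrite lt0n.
have nz_top : 2 * a - 2 * j != 0 by lia.
have nz_next : 2 * a - 2 * j - 2 != 0 by lia.
by rewrite /= nz_top nz_next.
Qed.

Section Insertion.

Variables (l : seq nat) (x : nat).
Hypotheses (lx_sorted : sorted geq (rcons l x)) (lx_odd : all odd (rcons l x)).

Local Notation s := (rcons l x).
Local Notation a := x.+1./2.
Local Notation d := (syl_d l).
Local Notation g := (pdouble (Syl l)).

Let lx_nonincr := sorted_geq_nth lx_sorted.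

Let l_nonincr := sorted_geq_nth (sorted_rcons_prefix lx_sorted).

Let l_odd : all odd l.
Proof. by move: lx_odd; rewrite all_rcons => /andP []. Qed.

Lemma x_double_half : x = (2 * a).-1 /\ 0 < a.
Proof.
have odd_x : odd x by move: lx_odd; rewrite all_rcons => /andP [].
by have := odd_half odd_x; lia.
Qed.

Lemma x_le_nth j : j < size l -> x <= nth 0 l j.
Proof.
move=> lt_jl; have := lx_nonincr (ltnW lt_jl).
by rewrite !nth_rcons lt_jl ltnn eqxx.
Qed.

Lemma conj_part_rcons_le c : c <= x -> conj_part s c = (size l).+1.
Proof.
move=> le_cx; rewrite -(size_rcons l x); apply: conj_part_all.
rewrite all_rcons le_cx; apply/(all_nthP 0) => j lt_jl.
exact: leq_trans le_cx (x_le_nth lt_jl).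
Qed.

Lemma syl_part_rcons i : i < syl_size l -> syl_part s i = syl_part l i + (i < (2 * a).-1).
Proof.
have [def_x a_gt0] := x_double_half.
elim/nat_double_ind: i => m lt_mL.
  have [lt_m_size _ _] := nth_above_diag l_nonincr l_odd (lt_syl_d_of_size lt_mL).
  have [eq_l _] := syl_part_double l_nonincr l_odd lt_mL.
  rewrite {1}/syl_part interleave_double /syl_odd conj_part_rcons.
  rewrite (_ : (2 * m.+1).-1 = (2 * m).+1); last lia.
  by change (part s m.+1) with (nth 0 s m); rewrite nth_rcons lt_m_size; lia.
have [lt_m_size _ _] := nth_above_diag l_nonincr l_odd (lt_syl_d_of_size (ltnW lt_mL)).
have [eq_l _] := syl_part_doubleS l_nonincr l_odd lt_mL.
rewrite {1}/syl_part interleave_doubleS /syl_even conj_part_rcons.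
by change (part s m.+1) with (nth 0 s m); rewrite nth_rcons lt_m_size; lia.
Qed.

Lemma syl_part_double_ge j : j < d -> a <= syl_part l (2 * j) + j.
Proof.
move=> lt_jd; have [lt_j_size _ _] := nth_above_diag l_nonincr l_odd lt_jd.
have lt_jL : 2 * j < syl_size l by rewrite /syl_size; case: (syl_eps l); lia.
have [eq_l _] := syl_part_double l_nonincr l_odd lt_jL.
have [above _] := syl_dP l_nonincr.
have le_conj : j.+1 <= conj_part l (2 * j).+1.
  by apply: conj_part_ge => // _; apply: above.
by have := x_le_nth lt_j_size; have [def_x _] := x_double_half; lia.
Qed.

Lemma ins_j_pdouble_Syl : ins_j a g = minn d a.-1.
Proof.
have [def_x a_gt0] := x_double_half.
apply: find_iota0 => [|j lt_j|lt_min]; first exact: geq_minr.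
  rewrite nth_pdouble_Syl ifT; last by rewrite /syl_size; case: (syl_eps l); lia.
  by have := @syl_part_double_ge j; lia.
rewrite nth_pdouble_Syl ifF; first lia.
by apply/negbTE; rewrite /syl_size; lia.
Qed.

Lemma syl_d_eq_size : d < a -> size l = d.
Proof.
move=> lt_da; have [_ below] := syl_dP l_nonincr; have [def_x _] := x_double_half.
case: (ltngtP d (size l)) => [/x_le_nth | | //]; first lia.
by rewrite ltnNge syl_d_le_size.
Qed.

Lemma syl_size_double : d < a -> syl_size l = 2 * d.
Proof.
move=> lt_da; have [def_x _] := x_double_half.
rewrite /syl_size; case def_eps: (syl_eps l); last lia.
move: def_eps; rewrite /syl_eps /part => /eqP eq_nth.
have [d0 | d_gt0] := posnP d; first lia.
have : x <= nth 0 l d.-1 by apply: x_le_nth; rewrite (syl_d_eq_size lt_da); lia.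
lia.
Qed.

Lemma syl_size_rcons_top : d < a -> syl_size s = (2 * d).+2 - (a == d.+1).
Proof.
move=> lt_da; have [def_x a_gt0] := x_double_half; have def_d := syl_d_eq_size lt_da.
have [above _] := syl_dP l_nonincr.
have d_s : syl_d s = d.+1.
  apply: (syl_d_eq lx_nonincr) => [j lt_j|]; rewrite nth_rcons.
    case: (ltnP j (size l)) => [lt_jl | le_lj]; first by apply: above; lia.
    by rewrite ifT; [lia | apply/eqP; lia].
  by rewrite ifF ?ifF //; apply/negbTE; lia.
rewrite /syl_size /syl_eps d_s; change (part s d.+1) with (nth 0 s d).
rewrite nth_rcons def_d ltnn eqxx.
by case: eqP; case: eqP; lia.
Qed.

Lemma syl_size_rcons_low : a <= d -> syl_size s = syl_size l.
Proof.
move=> le_ad; have [def_x a_gt0] := x_double_half; have le_dl := syl_d_le_size l_nonincr.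
have [above below] := syl_dP l_nonincr.
have d_s : syl_d s = d.
  apply: (syl_d_eq lx_nonincr) => [j lt_jd|]; rewrite nth_rcons.
    by rewrite ifT; [exact: above | lia].
  by case: (ltnP d (size l)) => // le_ld; rewrite ifT; [lia | apply/eqP; lia].
by rewrite /syl_size /syl_eps d_s /part nth_rcons ifT //; lia.
Qed.

Lemma syl_part_rcons_top : d < a -> syl_part s (2 * d) = a - d.
Proof.
move=> lt_da; have [def_x a_gt0] := x_double_half; have def_d := syl_d_eq_size lt_da.
rewrite /syl_part interleave_double /syl_odd conj_part_rcons_le; last lia.
by change (part s d.+1) with (nth 0 s d); rewrite nth_rcons def_d ltnn eqxx; lia.
Qed.

Lemma syl_part_rcons_topS : d.+1 < a -> syl_part s (2 * d).+1 = a - d.+1.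
Proof.
move=> lt_dSa; have [def_x a_gt0] := x_double_half; have def_d := syl_d_eq_size (ltnW lt_dSa).
rewrite /syl_part interleave_doubleS /syl_even conj_part_rcons_le; last lia.
by change (part s d.+1) with (nth 0 s d); rewrite nth_rcons def_d ltnn eqxx; lia.
Qed.

Lemma ins_pdouble_Syl_high : d.+1 < a -> ins a g = pdouble (Syl s).
Proof.
move=> lt_dSa; have [def_x a_gt0] := x_double_half.
have L_eq : syl_size l = 2 * d by apply: syl_size_double; lia.
have size_g : size g = 2 * d by rewrite pdouble_Syl size_mkseq.
have j_eq : ins_j a g = d by rewrite ins_j_pdouble_Syl; apply/minn_idPl; lia.
have := @ins_mid a g; rewrite j_eq size_g => ->; rewrite ?pdouble_Syl_gt0 //; last lia.
rewrite take_oversize ?size_g // drop_oversize ?size_g // cats0.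
rewrite [RHS]pdouble_Syl syl_size_rcons_top; last lia.
have -> : (a == d.+1) = false by apply/eqP; lia.
rewrite !mkseqS syl_part_rcons_top ?syl_part_rcons_topS; [|lia..].
have -> : mkseq (fun i => 2 * syl_part s i) (2 * d) = [seq y + 2 | y <- g].
  rewrite pdouble_Syl L_eq /mkseq -map_comp; apply/eq_in_map => i.
  by rewrite mem_iota => /andP [_ lt_i] /=; rewrite syl_part_rcons ?L_eq //; lia.
by rewrite -!cats1 -catA /=; congr (_ ++ [:: _; _]); lia.
Qed.

Lemma ins_pdouble_Syl_low : a <= d.+1 -> ins a g = pdouble (Syl s).
Proof.
move=> le_adS; have [def_x a_gt0] := x_double_half.
rewrite ins_top //; last by rewrite ins_j_pdouble_Syl; apply/minn_idPr; lia.
have -> : size g = syl_size l by rewrite pdouble_Syl size_mkseq.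
set f := fun i => nth 0 g i + 2 * (i < (2 * a).-1).
suff [le_M vals zeros] : [/\ syl_size s <= syl_size l + 2 * a,
    forall i, i < syl_size s -> f i = 2 * syl_part s i &
    forall i, syl_size s <= i -> f i = 0].
  rewrite (filter_neq0_mkseq le_M) => [|i lt_i|i /andP [le_i _]]; last exact: zeros.
  - by rewrite [RHS]pdouble_Syl; apply: eq_in_mkseq.
  - by rewrite vals // muln_eq0 /= -lt0n syl_part_gt0.
have low i : i < syl_size l -> f i = 2 * syl_part s i.
  by move=> lt_i; rewrite /f nth_pdouble_Syl lt_i syl_part_rcons //; lia.
have [le_ad | lt_da] := leqP a d.
  have le_L : (2 * d).-1 <= syl_size l by rewrite /syl_size; case: (syl_eps l); lia.
  rewrite syl_size_rcons_low //; split => [|//|i le_i]; first exact: leq_addr.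
  by rewrite /f nth_pdouble_Syl ltnNge le_i /=; lia.
have L_eq := syl_size_double lt_da.
rewrite syl_size_rcons_top // (_ : a == d.+1); last by apply/eqP; lia.
split => [|i lt_i|i le_i]; first lia.
  case: (ltnP i (2 * d)) => [lt_i2 | ge_i]; first by apply: low; rewrite L_eq.
  have -> : i = 2 * d by lia.
  by rewrite /f nth_pdouble_Syl L_eq ltnn syl_part_rcons_top //; lia.
by rewrite /f nth_pdouble_Syl L_eq ifF; [lia | apply/negbTE; lia].
Qed.

Lemma ins_pdouble_Syl_rcons : ins a g = pdouble (Syl s).
Proof. by case: (leqP a d.+1) => [/ins_pdouble_Syl_low | /ins_pdouble_Syl_high]. Qed.

End Insertion.

Theorem mainTheorem3 (n : nat) (lam : seq nat) :
  1 <= n -> in_O n lam ->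
  in_O (2 * n) (psq lam) /\ Phi (psq lam) = pdouble (Syl lam).
Proof.
move=> _ /andP [/and3P [lam_sorted lam_gt0 /eqP lam_sum] lam_odd]; split.
  by rewrite /in_O /is_partition sorted_psq // !all_psq lam_gt0 lam_odd sumn_psq lam_sum eqxx.
rewrite /Phi phi_beta_psq phi_alpha_psq //.
elim/last_ind: lam lam_sorted lam_odd {lam_gt0 lam_sum} => [//|l x IH] lx_sorted lx_odd.
rewrite foldl_rcons IH ?ins_pdouble_Syl_rcons ?(sorted_rcons_prefix lx_sorted) //.
by move: lx_odd; rewrite all_rcons => /andP [].
Qed.
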